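(* Let $D$ be an integral domain, $\star$ a semistar operation on $D$, $T$ an overring of $D$ and $\star'$ a semistar operation on $T$; write $\ell=\ell_{\star,T}$. Then: (1) $\ell$ is a stable semistar operation on $T$; (2) if $T$ is $(\star,\star')$-linked to $D$, then $\ell\le\widetilde{\star'}\le\star'_f$; in particular $T$ is $(\ell,\star')$-linked to $T$; (3) $T$ is $(\star,\ell)$-linked to $D$; in particular $D$ is $(\star,\tilde\star)$-linked to $D$; (4) $\ell$ is of finite type on $T$ and $\widetilde{\ell}=\ell$; (5) $\ell$ is the unique minimal element of the set $\{\ast_f:\ \ast$ a semistar operation on $T$ such that $T$ is $(\star,\ast)$-linked to $D\}$; (6) $T$ is $(\star,\star')$-linked to $D$ if and only if $T$ is $(\ell,\star')$-linked to $T$; (7) $T$ is $(\star,\star')$-linked to $D$ if and only if $\ell\le\star'_f$.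
   Context: Let $D$ be an integral domain with quotient field $K$. $\overline{\mathbf F}(D)$ denotes the set of all nonzero $D$-submodules of $K$ and $\mathbf f(D)$ the set of nonzero finitely generated $D$-submodules of $K$. A semistar operation on $D$ is a map $\star:\overline{\mathbf F}(D)\to\overline{\mathbf F}(D)$, $E\mapsto E^\star$, such that for all $0\ne x\in K$ and $E,F\in\overline{\mathbf F}(D)$: (1) $(xE)^\star=xE^\star$; (2) $E\subseteq F\Rightarrow E^\star\subseteq F^\star$; (3) $E\subseteq E^\star$ and $(E^\star)^\star=E^\star$. $\star_1\le\star_2$ means $E^{\star_1}\subseteq E^{\star_2}$ for all $E$. $\star$ is stable if $(E\cap F)^\star=E^\star\cap F^\star$ for all $E,F$. $\star_f$ is defined by $E^{\star_f}=\bigcup\{F^\star:F\in\mathbf f(D),F\subseteq E\}$; $\star$ is of finite type if $\star=\star_f$. A nonzero ideal $I$ of $D$ is a quasi-$\star$-ideal if $I^\star\cap D=I$; a quasi-$\star$-prime is a prime quasi-$\star$-ideal; a quasi-$\star$-maximal ideal is a maximal element among proper quasi-$\star$-ideals; $\mathcal M(\star_f)$ is the set of quasi-$\star_f$-maximal ideals, and $E^{\tilde\star}=\bigcap\{ED_Q:Q\in\mathcal M(\star_f)\}$ (equal to $K$ if $\mathcal M(\star_f)=\emptyset$). An overring of $D$ is a ring $T$ with $D\subseteq T\subseteq K$; all notions are defined analogously on $T$. $T$ is $(\star,\star')$-linked to $D$ if for every nonzero finitely generated ideal $F\subseteq D$ with $F^\star=D^\star$ one has $(FT)^{\star'}=T^{\star'}$.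 The semistar operation $\ell_{\star,T}$ on $T$ is defined by $E^{\ell_{\star,T}}=\bigcap\{ET_{D\setminus P}: P$ a quasi-$\star_f$-prime ideal of $D\}$ for $E\in\overline{\mathbf F}(T)$ (equal to $K$ if there are none). *)

(* All rings live inside a fixed field K (the quotient field). *)
From mathcomp Require Import all_boot all_algebra.
Set Implicit Arguments. Unset Strict Implicit. Unset Printing Implicit Defensive.
Import GRing.Theory.
Local Open Scope ring_scope.

Section SemistarDefs.
Variable K : fieldType.

Definition subK (A B : K -> Prop) := forall x, A x -> B x.
Definition capK (A B : K -> Prop) : K -> Prop := fun x => A x /\ B x.
Definition scaleK (x : K) (E : K -> Prop) : K -> Prop :=
  fun y => exists e, E e /\ y = x * e.

Definition subring (R : K -> Prop) :=
  [/\ R 0, R 1, (forall a b, R a -> R b -> R (a - b)) &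
      (forall a b, R a -> R b -> R (a * b))].

Definition domain_with_qf (D : K -> Prop) :=
  subring D /\ forall x : K, exists a b, [/\ D a, D b, b != 0 & x = a / b].

Definition overring (D T : K -> Prop) := subring T /\ subK D T.

Definition submod (R E : K -> Prop) :=
  [/\ E 0, (forall x y, E x -> E y -> E (x + y)) &
      (forall r x, R r -> E x -> E (r * x))].

Definition nzsubmod (R E : K -> Prop) := submod R E /\ exists x, E x /\ x != 0.

Definition genmod (R E : K -> Prop) : K -> Prop :=
  fun x => exists (n : nat) (c a : nat -> K),
    (forall i, (i < n)%N -> R (c i) /\ E (a i)) /\ x = \sum_(i < n) c i * a i.

Definition fgmod (R E : K -> Prop) :=
  exists (n : nat) (g : nat -> K),
    E = genmod R (fun y => exists i, (i < n)%N /\ y = g i).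

Definition fgnz (R E : K -> Prop) := nzsubmod R E /\ fgmod R E.

Definition semistar (R : K -> Prop) (st : (K -> Prop) -> (K -> Prop)) :=
  [/\ (forall E, nzsubmod R E -> nzsubmod R (st E)),
      (forall x E, x != 0 -> nzsubmod R E -> st (scaleK x E) = scaleK x (st E)),
      (forall E F, nzsubmod R E -> nzsubmod R F -> subK E F -> subK (st E) (st F)),
      (forall E, nzsubmod R E -> subK E (st E)) &
      (forall E, nzsubmod R E -> st (st E) = st E)].

Definition st_le (R : K -> Prop) (s1 s2 : (K -> Prop) -> (K -> Prop)) :=
  forall E, nzsubmod R E -> subK (s1 E) (s2 E).

Definition stable (R : K -> Prop) (st : (K -> Prop) -> (K -> Prop)) :=
  forall E F, nzsubmod R E -> nzsubmod R F -> st (capK E F) = capK (st E) (st F).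

Definition finite_part (R : K -> Prop) (st : (K -> Prop) -> (K -> Prop))
  : (K -> Prop) -> (K -> Prop) :=
  fun E x => exists F, [/\ fgnz R F, subK F E & st F x].

Definition finite_type (R : K -> Prop) (st : (K -> Prop) -> (K -> Prop)) :=
  forall E, nzsubmod R E -> st E = finite_part R st E.

Definition nzideal (R I : K -> Prop) := subK I R /\ nzsubmod R I.

Definition quasi_ideal (R : K -> Prop) (st : (K -> Prop) -> (K -> Prop)) I :=
  nzideal R I /\ capK (st I) R = I.

Definition quasi_prime (R : K -> Prop) (st : (K -> Prop) -> (K -> Prop)) P :=
  [/\ quasi_ideal R st P, ~ P 1 &
      forall a b, R a -> R b -> P (a * b) -> P a \/ P b].

Definition quasi_max (R : K -> Prop) (st : (K -> Prop) -> (K -> Prop)) Q :=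
  [/\ quasi_ideal R st Q, ~ Q 1 &
      forall I, quasi_ideal R st I -> ~ I 1 -> subK Q I -> I = Q].

(* E S^{-1} for a multiplicative subset S of K, i.e. E T_S = E_S *)
Definition locK (S E : K -> Prop) : K -> Prop :=
  fun x => exists e s, [/\ E e, S s & x = e / s].

Definition compl_in (R P : K -> Prop) : K -> Prop := fun s => R s /\ ~ P s.

(* star tilde: intersection of E R_Q, Q quasi-star_f-maximal (K if none) *)
Definition stilde (R : K -> Prop) (st : (K -> Prop) -> (K -> Prop))
  : (K -> Prop) -> (K -> Prop) :=
  fun E x => forall Q, quasi_max R (finite_part R st) Q -> locK (compl_in R Q) E x.

Definition ell (D : K -> Prop) (st : (K -> Prop) -> (K -> Prop))
  : (K -> Prop) -> (K -> Prop) :=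
  fun E x => forall P, quasi_prime D (finite_part D st) P -> locK (compl_in D P) E x.

Definition linked (D : K -> Prop) (st : (K -> Prop) -> (K -> Prop))
  (T : K -> Prop) (st' : (K -> Prop) -> (K -> Prop)) :=
  forall F, nzideal D F -> fgmod D F -> st F = st D ->
    st' (genmod T F) = st' T.

End SemistarDefs.

From mathcomp Require Import all_boot all_algebra.
From mathcomp Require Import ring.
From Stdlib Require Import Classical FunctionalExtensionality PropExtensionality.
From mathcomp Require classical_sets.
Set Implicit Arguments. Unset Strict Implicit. Unset Printing Implicit Defensive.
Import GRing.Theory.
Local Open Scope ring_scope.

(* [ell] is an intersection of localizations [T_(D \ P)] at prime ideals [P] of [D],
   hence a stable semistar operation.  Quasi-[st_f]-maximal ideals are prime (a
   conductor argument), and by Zorn's lemma every proper quasi-[st_f]-ideal lies in one.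
   So if [x] is in [ell E], the conductor [(E :_D x)] satisfies [1 \in (E :_D x)^st_f].
   When [T] is [(st, st')]-linked to [D], the [T]-ideal it generates is then
   [st']-trivial, so it escapes every quasi-[st'_f]-maximal ideal [Q] of [T], whence
   [x \in E T_Q]: this is [ell <= st'~], and [st'~ <= st'_f] by the same conductor
   argument over [T].  Conversely, a finitely generated [F] with [F^st = D^st] meets the
   complement of every quasi-[st_f]-prime [P], so [F T_(D \ P) = T_(D \ P)]: [T] is
   [(st, ell)]-linked to [D]. *)

Section Modules.
Variable K : fieldType.
Implicit Types (R S E F A : K -> Prop).

Lemma subK_antisym A B : subK A B -> subK B A -> A = B.
Proof.
move=> AB BA; apply: functional_extensionality => x.
by apply: propositional_extensionality; split; [exact: AB | exact: BA].
Qed.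

Lemma subring0 R : subring R -> R 0. Proof. by case. Qed.
Lemma subring1 R : subring R -> R 1. Proof. by case. Qed.
Lemma subringB R a b : subring R -> R a -> R b -> R (a - b).
Proof. by case=> _ _ + _; apply. Qed.
Lemma subringM R a b : subring R -> R a -> R b -> R (a * b).
Proof. by case=> _ _ _; apply. Qed.
Lemma subringN R a : subring R -> R a -> R (- a).
Proof. by move=> hR ha; have := subringB hR (subring0 hR) ha; rewrite sub0r. Qed.
Lemma subringD R a b : subring R -> R a -> R b -> R (a + b).
Proof. by move=> hR ha hb; have := subringB hR ha (subringN hR hb); rewrite opprK. Qed.

Lemma subring_submod R : subring R -> submod R R.
Proof.
by move=> hR; split=> [|x y|r x]; [exact: subring0 | exact: subringD | exact: subringM].
Qed.

Lemma subring_nzsubmod R : subring R -> nzsubmod R R.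
Proof.
move=> hR; split; first exact: subring_submod.
by exists 1; split; [exact: subring1 | exact: oner_neq0].
Qed.

Lemma submod_restrict R S E : subK R S -> submod S E -> submod R E.
Proof. by move=> RS [E0 ED EM]; split=> // r x /RS; apply: EM. Qed.

Lemma capK_submod R E F : submod R E -> submod R F -> submod R (capK E F).
Proof.
case=> E0 ED EM [F0 FD FM]; split=> //.
- by move=> x y [? ?] [? ?]; split; [apply: ED | apply: FD].
- by move=> r x hr [? ?]; split; [apply: EM | apply: FM].
Qed.

Definition gens (g : nat -> K) n : K -> Prop := fun y => exists i, (i < n)%N /\ y = g i.

Lemma genmod_min R E A : submod R E -> subK A E -> subK (genmod R A) E.
Proof.
case=> E0 ED EM AE x [n [c [a [h ->]]]].
elim: n h => [|n IH] h; first by rewrite big_ord0.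
rewrite big_ord_recr /=; apply: ED.
  by apply: IH => i hi; apply: h; apply: ltnW.
by have [hc ha] := h n (ltnSn n); apply: EM => //; apply: AE.
Qed.

Lemma sub_genmod R A : R 1 -> subK A (genmod R A).
Proof.
move=> R1 x hx; exists 1%N, (fun _ => 1), (fun _ => x); split; first by [].
by rewrite big_ord1 mul1r.
Qed.

Lemma genmod_submod R A : subring R -> submod R (genmod R A).
Proof.
move=> hR; split.
- by exists 0%N, (fun _ => 0), (fun _ => 0); split => //; rewrite big_ord0.
- move=> x y [n1 [c1 [a1 [h1 ->]]]] [n2 [c2 [a2 [h2 ->]]]].
  exists (n1 + n2)%N, (fun i => if (i < n1)%N then c1 i else c2 (i - n1)%N),
     (fun i => if (i < n1)%N then a1 i else a2 (i - n1)%N); split.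
    move=> i hi; case: ifP => hin; first exact: h1.
    by apply: h2; rewrite ltn_subLR // leqNgt hin.
  rewrite big_split_ord /=; congr (_ + _).
    by apply: eq_bigr => i _; rewrite /= ltn_ord.
  by apply: eq_bigr => i _; rewrite /= ltnNge leq_addr /= addKn.
- move=> r x hr [n [c [a [h ->]]]]; exists n, (fun i => r * c i), a; split.
    by move=> i hi; have [? ?] := h i hi; split => //; apply: subringM.
  by rewrite mulr_sumr; apply: eq_bigr => i _; rewrite mulrA.
Qed.

Lemma genmod_id R E : subring R -> submod R E -> genmod R E = E.
Proof.
move=> hR hE; apply: subK_antisym; first exact: genmod_min.
by apply: sub_genmod; exact: subring1.
Qed.

Lemma genmod_genmod R S A : subring R -> subring S -> subK R S ->
  genmod S (genmod R A) = genmod S A.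
Proof.
move=> hR hS RS; apply: subK_antisym; apply: genmod_min; try exact: genmod_submod.
  apply: genmod_min; first exact/(submod_restrict RS)/genmod_submod.
  by apply: sub_genmod; exact: subring1.
move=> y hy; apply: sub_genmod; first exact: subring1.
by apply: sub_genmod hy; exact: subring1.
Qed.

Lemma genmod_gens R g n i : R 1 -> (i < n)%N -> genmod R (gens g n) (g i).
Proof. by move=> R1 hi; apply: sub_genmod => //; exists i. Qed.

Lemma fgmod_join R F1 F2 : subring R -> fgmod R F1 -> fgmod R F2 ->
  exists F, [/\ fgmod R F, subK F1 F, subK F2 F &
     forall E, submod R E -> subK F1 E -> subK F2 E -> subK F E].
Proof.
move=> hR [n1 [g1 ->]] [n2 [g2 ->]]; have R1 := subring1 hR.
set g := fun i => if (i < n1)%N then g1 i else g2 (i - n1)%N.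
exists (genmod R (gens g (n1 + n2))); split.
- by exists (n1 + n2)%N, g.
- apply: genmod_min; first exact: genmod_submod.
  move=> _ [i [hi ->]]; have -> : g1 i = g i by rewrite /g hi.
  by apply: genmod_gens; rewrite // ltn_addr.
- apply: genmod_min; first exact: genmod_submod.
  move=> _ [i [hi ->]]; have -> : g2 i = g (n1 + i)%N.
    by rewrite /g ltnNge leq_addr /= addKn.
  by apply: genmod_gens; rewrite // ltn_add2l.
- move=> E hE s1 s2; apply: genmod_min => // _ [i [hi ->]].
  rewrite /g; case: ifP => hin; first by apply/s1/genmod_gens.
  by apply/s2/genmod_gens; rewrite // ltn_subLR // leqNgt hin.
Qed.

Lemma fgmod_cyclic R x : subring R ->
  [/\ fgmod R (genmod R (gens (fun=> x) 1)), genmod R (gens (fun=> x) 1) x &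
     forall E, submod R E -> E x -> subK (genmod R (gens (fun=> x) 1)) E].
Proof.
move=> hR; split.
- by exists 1%N, (fun=> x).
- by apply: (genmod_gens (fun=> x)); [exact: subring1 | exact: ltnSn].
- by move=> E hE hx; apply: genmod_min => // _ [i [_ ->]].
Qed.

Lemma fgmod_submod R F : subring R -> fgmod R F -> submod R F.
Proof. by move=> hR [n [g ->]]; apply: genmod_submod. Qed.

Lemma fgmod_fgnz R F y : subring R -> fgmod R F -> F y -> y != 0 -> fgnz R F.
Proof. by move=> hR hF hy ny; split=> //; split; [exact: fgmod_submod | exists y]. Qed.

Lemma fgnz_cover R E x : subring R -> nzsubmod R E -> E x ->
  exists F, [/\ fgnz R F, subK F E & F x].
Proof.
move=> hR [hE [e0 [he0 ne0]]] hx.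
have [cx_fg cx_x cx_min] := fgmod_cyclic x hR.
have [ce_fg ce_e ce_min] := fgmod_cyclic e0 hR.
have [F [hF s1 s2 Fmin]] := fgmod_join hR cx_fg ce_fg.
exists F; split; [exact: (fgmod_fgnz hR hF (s2 _ ce_e)) | | exact: s1].
by apply: Fmin => //; [exact: cx_min | exact: ce_min].
Qed.

Lemma nzsubmod_scale R x E : x != 0 -> nzsubmod R E -> nzsubmod R (scaleK x E).
Proof.
move=> nx [[E0 ED EM] [e0 [he0 ne0]]]; split; last first.
  by exists (x * e0); split; [exists e0 | rewrite mulf_neq0].
split.
- by exists 0; rewrite mulr0.
- move=> _ _ [a [ha ->]] [b [hb ->]]; exists (a + b).
  by split; [exact: ED | rewrite mulrDr].
- move=> r _ hr [a [ha ->]]; exists (r * a).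
  by split; [exact: EM | rewrite mulrCA].
Qed.

Lemma fgmod_scale R x F : x != 0 -> fgmod R F -> fgmod R (scaleK x F).
Proof.
move=> nx [n [g ->]]; exists n, (fun i => x * g i); apply: subK_antisym.
  move=> _ [_ [[m [c [a [h ->]]]] ->]].
  exists m, c, (fun i => x * a i); split.
    by move=> i hi; have [h1 [j [hj ->]]] := h i hi; split => //; exists j.
  by rewrite mulr_sumr; apply: eq_bigr => i _; rewrite mulrCA.
move=> _ [m [c [a [h ->]]]].
exists (\sum_(i < m) c i * (x^-1 * a i)); split.
  exists m, c, (fun i => x^-1 * a i); split => //.
  move=> i hi; have [h1 [j [hj ->]]] := h i hi.
  by split => //; exists j; rewrite mulKf.
by rewrite mulr_sumr; apply: eq_bigr => i _; rewrite mulrCA mulVKf.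
Qed.

Lemma fgnz_scale R x F : x != 0 -> fgnz R F -> fgnz R (scaleK x F).
Proof. by move=> nx [hF fgF]; split; [exact: nzsubmod_scale | exact: fgmod_scale]. Qed.

Lemma genmod_nzideal R S F : subring R -> subring S -> subK R S ->
  nzideal R F -> fgmod R F -> nzideal S (genmod S F) /\ fgmod S (genmod S F).
Proof.
move=> hR hS RS [FR [_ [f0 [hf0 nf0]]]] [n [g defF]]; split; last first.
  by exists n, g; rewrite defF genmod_genmod.
split; first by apply: genmod_min; [exact: subring_submod | move=> y /FR /RS].
split; first exact: genmod_submod.
by exists f0; split => //; apply: sub_genmod hf0; exact: subring1.
Qed.

End Modules.

Section FinitePart.
Variable K : fieldType.
Variable R : K -> Prop.
Variable st : (K -> Prop) -> (K -> Prop).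
Hypothesis hR : subring R.
Hypothesis hs : semistar R st.
Local Notation fp := (finite_part R st).
Implicit Types (E F : K -> Prop).

Lemma st_nz E : nzsubmod R E -> nzsubmod R (st E).
Proof. by case: hs => + _ _ _ _; apply. Qed.
Lemma st_scale x E : x != 0 -> nzsubmod R E -> st (scaleK x E) = scaleK x (st E).
Proof. by case: hs => _ + _ _ _; apply. Qed.
Lemma st_mono E F : nzsubmod R E -> nzsubmod R F -> subK E F -> subK (st E) (st F).
Proof. by case: hs => _ _ + _ _; apply. Qed.
Lemma st_ext E : nzsubmod R E -> subK E (st E).
Proof. by case: hs => _ _ _ + _; apply. Qed.
Lemma st_idem E : nzsubmod R E -> st (st E) = st E.
Proof. by case: hs => _ _ _ _; apply. Qed.

Lemma st_eq_ring_of_one F : nzsubmod R F -> subK F R -> st F 1 -> st F = st R.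
Proof.
move=> hF FR F1; apply: subK_antisym; first exact: st_mono (subring_nzsubmod hR) FR.
rewrite -(st_idem hF); apply: st_mono (subring_nzsubmod hR) (st_nz hF) _.
by move=> r hr; rewrite -[r]mulr1; have [[_ _ SM] _] := st_nz hF; exact: SM.
Qed.

Lemma finite_part_mono E F : subK E F -> subK (fp E) (fp F).
Proof. by move=> EF x [G [hG GE hx]]; exists G; split => // y /GE /EF. Qed.

Lemma finite_part_ext E : nzsubmod R E -> subK E (fp E).
Proof.
move=> hE x hx; have [F [hF FE Fx]] := fgnz_cover hR hE hx.
by exists F; split => //; apply: st_ext => //; case: hF.
Qed.

Lemma finite_part_join E F1 F2 : fgnz R F1 -> fgnz R F2 -> subK F1 E -> subK F2 E ->
  submod R E ->
  exists F, [/\ fgnz R F, subK F E, subK (st F1) (st F) & subK (st F2) (st F)].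
Proof.
move=> hF1 hF2 F1E F2E hE.
have [F [fgF s1 s2 Fmin]] := fgmod_join hR (proj2 hF1) (proj2 hF2).
have [[_ [y [hy ny]]] _] := hF1.
have hF : fgnz R F := fgmod_fgnz hR fgF (s1 _ hy) ny.
exists F; split; [exact: hF | exact: Fmin | |].
- exact: st_mono (proj1 hF1) (proj1 hF) s1.
- exact: st_mono (proj1 hF2) (proj1 hF) s2.
Qed.

Lemma finite_part_nz E : nzsubmod R E -> nzsubmod R (fp E).
Proof.
move=> hE; have [[E0 ED EM] [e0 [he0 ne0]]] := hE.
split; last by exists e0; split => //; apply: finite_part_ext.
split.
- exact: finite_part_ext.
- move=> x y [F1 [hF1 s1 hx]] [F2 [hF2 s2 hy]].
  have [F [hF FE t1 t2]] := finite_part_join hF1 hF2 s1 s2 (proj1 hE).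
  exists F; split => //.
  by have [[_ SD _] _] := st_nz (proj1 hF); apply: SD; [apply: t1 | apply: t2].
- move=> r x hr [F [hF FE hx]]; exists F; split => //.
  by have [[_ _ SM] _] := st_nz (proj1 hF); apply: SM.
Qed.

Lemma finite_part_common E g n : nzsubmod R E ->
  (forall i, (i < n)%N -> fp E (g i)) ->
  exists H, [/\ fgnz R H, subK H E & forall i, (i < n)%N -> st H (g i)].
Proof.
move=> hE; elim: n => [|n IH] hg.
  have [_ [e0 [he0 _]]] := hE; have [H [hH HE _]] := fgnz_cover hR hE he0.
  by exists H; split.
have [H [hH HE Hg]] := IH (fun i hi => hg i (ltnW hi)).
have [F [hF FE Fg]] := hg n (ltnSn n).
have [H' [hH' H'E sH sF]] := finite_part_join hH hF HE FE (proj1 hE).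
exists H'; split => // i; rewrite ltnS leq_eqVlt => /orP [/eqP -> | hi].
  exact: sF.
by apply: sH; apply: Hg.
Qed.

Lemma finite_part_idem E : nzsubmod R E -> fp (fp E) = fp E.
Proof.
move=> hE; apply: subK_antisym; last exact/finite_part_ext/finite_part_nz.
move=> x [G [[hG [n [g defG]]] GE Gx]].
have [H [hH HE Hg]] : exists H, [/\ fgnz R H, subK H E &
    forall i, (i < n)%N -> st H (g i)].
  apply: finite_part_common => // i hi; apply: GE; rewrite defG.
  by apply: genmod_gens => //; exact: subring1.
have GH : subK G (st H).
  rewrite defG; apply: genmod_min; first by case: (st_nz (proj1 hH)).
  by move=> _ [i [hi ->]]; apply: Hg.
exists H; split => //; rewrite -(st_idem (proj1 hH)).
exact: st_mono hG (st_nz (proj1 hH)) GH _ Gx.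
Qed.

End FinitePart.

Section Conductor.
Variable K : fieldType.
Implicit Types (R M E : K -> Prop).

Definition conductor R E (x : K) : K -> Prop := fun d => R d /\ E (d * x).

Definition quotient_field R :=
  forall x : K, exists a b, [/\ R a, R b, b != 0 & x = a / b].

Lemma quotient_field_sub R M : quotient_field R -> subK R M -> quotient_field M.
Proof.
move=> hq RM x; have [a [b [ha hb nb ->]]] := hq x.
by exists a, b; split => //; apply: RM.
Qed.

Lemma conductor_submod R M E x : subring R -> subK R M -> submod M E ->
  submod R (conductor R E x).
Proof.
move=> hR RM [E0 ED EM]; split.
- by split; [exact: subring0 | rewrite mul0r].
- move=> y z [? ?] [? ?]; split; first exact: subringD.
  by rewrite mulrDl; apply: ED.
- move=> r y hr [? ?]; split; first exact: subringM.
  by rewrite -mulrA; apply: EM => //; apply: RM.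
Qed.

(* A common denominator of [x] and of a nonzero element of [E] lies in the conductor. *)
Lemma conductor_nzideal R M E x : subring R -> subK R M -> quotient_field R ->
  nzsubmod M E -> nzideal R (conductor R E x).
Proof.
move=> hR RM hq hE; have [[_ _ EM] [e0 [he0 ne0]]] := hE.
split; first by move=> y [].
split; first exact: conductor_submod (proj1 hE).
have [a [b [ha hb nb ->]]] := hq x; have [c [f [hc hf nf e0E]]] := hq e0.
have nc : c != 0 by apply: contraNneq ne0; rewrite e0E => ->; rewrite mul0r.
exists (b * c); split; last by rewrite mulf_neq0.
split; first exact: subringM.
have -> : b * c * (a / b) = (a * f) * e0 by rewrite e0E; field; rewrite nb nf.
by apply: EM => //; apply: RM; apply: subringM.
Qed.

End Conductor.

Section QuasiIdeals.
Variable K : fieldType.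
Variable R : K -> Prop.
Variable st : (K -> Prop) -> (K -> Prop).
Hypothesis hR : subring R.
Hypothesis hs : semistar R st.
Local Notation fp := (finite_part R st).
Implicit Types (I J Q : K -> Prop).

Lemma quasi_ideal_mem Q x : quasi_ideal R fp Q -> fp Q x -> R x -> Q x.
Proof. by move=> [_ eQ] hx xR; rewrite -eQ. Qed.

Lemma quasi_ideal_fg_one Q F :
  quasi_ideal R fp Q -> fgnz R F -> subK F Q -> st F 1 -> Q 1.
Proof.
by move=> qQ hF FQ F1; apply: (quasi_ideal_mem qQ); [exists F | exact: subring1].
Qed.

(* The conductor [(Q : b)] is a quasi-ideal above [Q], hence equal to [Q]. *)
Lemma quasi_max_prime Q : quasi_max R fp Q -> quasi_prime R fp Q.
Proof.
move=> [qQ nQ1 Qmax]; split => // a b ha hb Qab.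
have [[QR [hQ [q [hq nq]]]] _] := qQ.
have [Qb | nQb] := classic (Q b); [by right | left].
set J := conductor R Q b.
have QJ : subK Q J.
  by move=> y hy; split; [exact: QR | rewrite mulrC; case: hQ => _ _; apply].
have hJ : nzideal R J.
  split; first by move=> y [].
  by split; [exact: conductor_submod hQ | exists q; split => //; apply: QJ].
have nb : b != 0 by apply: contra_not_neq nQb => ->; case: hQ.
have qJ : quasi_ideal R fp J.
  split => //; apply: subK_antisym; last first.
    move=> y hy; split; last exact: (proj1 hJ).
    exact: (finite_part_ext hR hs (proj2 hJ)).
  move=> y [[F [hF FJ Fy]] hyR]; split => //.
  rewrite /J /conductor mulrC; apply: (quasi_ideal_mem qQ); last exact: subringM.
  exists (scaleK b F); split; first exact: fgnz_scale.
    by move=> _ [f [hf ->]]; rewrite mulrC; exact: (proj2 (FJ f hf)).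
  by rewrite (st_scale hs nb (proj1 hF)); exists y.
have -> : Q = J by symmetry; apply: Qmax => // -[_]; rewrite mul1r.
by split.
Qed.

Definition quasi_above I J := [/\ quasi_ideal R fp J, ~ J 1 & subK I J].

Lemma fp_meet_quasi_above I : nzideal R I -> ~ fp I 1 -> quasi_above I (capK (fp I) R).
Proof.
move=> [IR hI] nI1; have I_fp := finite_part_ext hR hs hI.
have hJ : nzideal R (capK (fp I) R).
  split; first by move=> x [].
  split; first apply: capK_submod.
  - by case: (finite_part_nz hR hs hI).
  - exact: subring_submod.
  have [_ [i0 [hi0 ni0]]] := hI.
  by exists i0; split => //; split; [exact: I_fp | exact: IR].
split; [split => // | by case | by move=> x hx; split; [exact: I_fp | exact: IR]].
apply: subK_antisym => [x [hx hxR] | x hx]; last first.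
  by split; [exact: (finite_part_ext hR hs (proj2 hJ)) | case: hx].
split => //; rewrite -(finite_part_idem hR hs hI).
by apply: (@finite_part_mono _ _ _ (capK (fp I) R)) => // y [].
Qed.

Section Chain.
Variable I : K -> Prop.
Variable C : (K -> Prop) -> Prop.
Hypothesis C_above : forall J, C J -> quasi_above I J.
Hypothesis C_total : forall J1 J2, C J1 -> C J2 -> subK J1 J2 \/ subK J2 J1.
Variable J0 : K -> Prop.
Hypothesis CJ0 : C J0.
Local Notation U := (fun a => exists2 J, C J & J a).

Lemma chain_finite_cover (g : nat -> K) n : (forall i, (i < n)%N -> U (g i)) ->
  exists J, C J /\ forall i, (i < n)%N -> J (g i).
Proof.
elim: n => [|n IH] hg; first by exists J0.
have [J [CJ Jg]] := IH (fun i hi => hg i (ltnW hi)).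
have [J' CJ' J'g] := hg n (ltnSn n).
have [JJ' | J'J] := C_total CJ CJ'.
  exists J'; split => // i; rewrite ltnS leq_eqVlt => /orP [/eqP -> // | hi].
  exact/JJ'/Jg.
exists J; split => // i; rewrite ltnS leq_eqVlt => /orP [/eqP -> | hi].
  exact: J'J.
exact: Jg.
Qed.

Lemma chain_union_nzideal : nzideal R U.
Proof.
have sub_R J : C J -> subK J R by move=> /C_above [[[] ]].
have submodJ J : C J -> submod R J by move=> /C_above [[[_ []]]].
split; first by move=> x [J /sub_R]; apply.
split; last first.
  have [[[_ [_ [q [hq nq]]]] _] _ _] := C_above CJ0.
  by exists q; split => //; exists J0.
split.
- by exists J0 => //; case: (submodJ _ CJ0).
- move=> x y [J1 C1 h1] [J2 C2 h2].
  have [S12 | S21] := C_total C1 C2.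
    by exists J2 => //; case: (submodJ _ C2) => _ + _; apply => //; apply: S12.
  by exists J1 => //; case: (submodJ _ C1) => _ + _; apply => //; apply: S21.
- by move=> r x hr [J CJ hx]; exists J => //; case: (submodJ _ CJ) => _ _; apply.
Qed.

Lemma chain_union_quasi_above : quasi_above I U.
Proof.
have hU := chain_union_nzideal.
split; last 2 first.
- by move=> [J /C_above [_ + _]].
- by move=> x hx; exists J0 => //; case: (C_above CJ0) => _ _; apply.
split => //; apply: subK_antisym => [x [[F [hF FU Fx]] hxR] | x hx]; last first.
  by split; [exact: (finite_part_ext hR hs (proj2 hU)) | exact: (proj1 hU)].
have [_ [n [g defF]]] := hF.
have [J [CJ Jg]] : exists J, C J /\ forall i, (i < n)%N -> J (g i).
  apply: chain_finite_cover => i hi; apply: FU; rewrite defF.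
  by apply: genmod_gens => //; exact: subring1.
have [qJ _ _] := C_above CJ.
have FJ : subK F J.
  rewrite defF; apply: genmod_min; first by case: qJ => [[_ []]].
  by move=> _ [i [hi ->]]; apply: Jg.
by exists J => //; apply: (quasi_ideal_mem qJ) => //; exists F.
Qed.

End Chain.

(* Zorn's lemma is applied to the quasi-ideals above [I] together with the empty set,
   so that the empty chain has an upper bound. *)
Lemma quasi_max_exists I : nzideal R I -> ~ fp I 1 ->
  exists Q, quasi_max R fp Q /\ subK I Q.
Proof.
move=> hI nI1.
pose P J := (forall x, ~ J x) \/ quasi_above I J.
have [A [PA Amax]] : exists A, P A /\ (forall B, classical_sets.proper A B -> ~ P B).
  apply: classical_sets.Zorn_bigcup => C CP Ctot.
  pose C' J := C J /\ quasi_above I J.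
  have union_C' : classical_sets.bigcup C id = (fun a => exists2 J, C' J & J a).
    apply: subK_antisym => [x [J CJ Jx] | x [J [CJ _] Jx]]; last by exists J.
    by case: (CP J CJ) => [/(_ x) // | aJ]; exists J.
  rewrite union_C'; have [[J0 C'J0] | none] := classic (exists J, C' J).
    right; apply: (@chain_union_quasi_above I C') C'J0 => [J [] // |].
    move=> J1 J2 [C1 _] [C2 _].
    by case: (Ctot J1 J2 C1 C2); [left | right].
  by left => x [J C'J _]; apply: none; exists J.
have aJ := fp_meet_quasi_above hI nI1.
have [_ [i0 [hi0 _]]] := proj2 hI.
have [A_empty | aA] := PA.
  exfalso; apply: (Amax _ _ (or_intror aJ)); split; first by move=> x /A_empty.
  by move=> /(_ i0) h; apply: (A_empty i0); apply: h; case: aJ => _ _; apply.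
have [qA nA1 IA] := aA; exists A; split => //; split => // J qJ nJ1 AJ.
apply: NNPP => neq; apply: (Amax J); last by right; split => // x /IA /AJ.
by split => // JA; apply: neq; apply: subK_antisym.
Qed.

End QuasiIdeals.

Section Localization.
Variable K : fieldType.
Variables D T : K -> Prop.
Hypothesis hD : subring D.
Hypothesis hDT : subK D T.
Implicit Types (E F P : K -> Prop) (Phi : (K -> Prop) -> Prop).

Definition prime_in P := [/\ P 0, ~ P 1 &
  forall a b, D a -> D b -> P (a * b) -> P a \/ P b].

Definition loc_meet Phi E : K -> Prop :=
  fun x => forall P, Phi P -> locK (compl_in D P) E x.

Section Prime.
Variable P : K -> Prop.
Hypothesis hP : prime_in P.
Local Notation S := (compl_in D P).
Local Notation loc := (locK S).

Lemma compl_in_neq0 s : S s -> s != 0.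
Proof. by case: hP => P0 _ _ [_ sP]; apply: contra_not_neq sP => ->. Qed.

Lemma compl_inM s t : S s -> S t -> S (s * t).
Proof.
case: hP => _ _ Pprime [sD sP] [tD tP]; split; first exact: subringM.
by move/(Pprime _ _ sD tD) => [].
Qed.

Lemma compl_in1 : S 1.
Proof. by case: hP => _ P1 _; split => //; exact: subring1. Qed.

Lemma locK_ext E : subK E (loc E).
Proof.
by move=> x hx; exists x, 1; split => //; [exact: compl_in1 | rewrite divr1].
Qed.

Lemma locK_mono E F : subK E F -> subK (loc E) (loc F).
Proof. by move=> EF _ [e [s [he hs ->]]]; exists e, s; split => //; apply: EF. Qed.

Lemma locK_submod E : submod T E -> submod T (loc E).
Proof.
case=> E0 ED EM; split.
- exact: locK_ext.
- move=> _ _ [e [s [he hs ->]]] [f [t [hf ht ->]]].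
  have [ns nt] := (compl_in_neq0 hs, compl_in_neq0 ht).
  exists (t * e + s * f), (s * t); split.
  + by apply: ED; apply: EM => //; apply: hDT; [case: ht | case: hs].
  + exact: compl_inM.
  + by field; rewrite ns nt.
- move=> r _ hr [e [s [he hs ->]]]; exists (r * e), s.
  by split => //; [exact: EM | rewrite mulrA].
Qed.

(* An element of [F] outside [P] becomes a unit after localizing at [P]. *)
Lemma locK_genmod_unit R F f : subring R -> subK D R -> subK F D -> F f -> ~ P f ->
  loc (genmod R F) = loc R.
Proof.
move=> hR DR FD hf nPf; apply: subK_antisym.
  apply: locK_mono; apply: genmod_min; first exact: subring_submod.
  by move=> y /FD /DR.
move=> _ [r [s [hr hs ->]]].
have Sf : S f by split => //; apply: FD.
exists (r * f), (s * f); split.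
- by exists 1%N, (fun=> r), (fun=> f); split => //; rewrite big_ord1.
- exact: compl_inM.
- by have [ns nf] := (compl_in_neq0 hs, compl_in_neq0 Sf); field; rewrite ns nf.
Qed.

End Prime.

Section Meet.
Variable Phi : (K -> Prop) -> Prop.
Hypothesis Phi_prime : forall P, Phi P -> prime_in P.
Local Notation L := (loc_meet Phi).

Lemma loc_meet_mono E F : subK E F -> subK (L E) (L F).
Proof. by move=> EF x hx P hP; apply: (locK_mono EF); apply: hx. Qed.

Lemma loc_meet_ext E : subK E (L E).
Proof. by move=> x hx P /Phi_prime hP; exact: locK_ext. Qed.

Lemma loc_meet_nz E : nzsubmod T E -> nzsubmod T (L E).
Proof.
move=> [hE [e0 [he0 ne0]]]; split; last by exists e0; split => //; exact: loc_meet_ext.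
have hloc P : Phi P -> submod T (locK (compl_in D P) E).
  by move=> /Phi_prime hP; exact: locK_submod.
split.
- by move=> P /hloc [].
- by move=> x y hx hy P hP; case: (hloc P hP) => _ + _; apply; [apply: hx | apply: hy].
- by move=> r x hr hx P hP; case: (hloc P hP) => _ _; apply => //; apply: hx.
Qed.

Lemma loc_meet_scale x E : x != 0 -> L (scaleK x E) = scaleK x (L E).
Proof.
move=> nx; apply: subK_antisym => [y hy | _ [z [hz ->]] P hP].
  exists (y / x); split; last by field.
  move=> P hP; have [_ [s [[e [he ->]] hs ->]]] := hy P hP.
  have ns := compl_in_neq0 (Phi_prime hP) hs.
  by exists e, s; split => //; field; rewrite ns nx.
have [e [s [he hs ->]]] := hz P hP.
by exists (x * e), s; split => //; [exists e | rewrite mulrA].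
Qed.

Lemma loc_meet_idem E : L (L E) = L E.
Proof.
apply: subK_antisym; last exact: loc_meet_ext.
move=> x hx P hP; have hP' := Phi_prime hP.
have [y [s [hy hs ->]]] := hx P hP; have [e [t [he ht ->]]] := hy P hP.
exists e, (t * s); split => //; first exact: compl_inM.
by have [ns nt] := (compl_in_neq0 hP' hs, compl_in_neq0 hP' ht); field; rewrite ns nt.
Qed.

Lemma loc_meet_semistar : semistar T L.
Proof.
split=> [E | x E nx _ | E F _ _ | E _ | E _].
- exact: loc_meet_nz.
- exact: loc_meet_scale.
- exact: loc_meet_mono.
- exact: loc_meet_ext.
- exact: loc_meet_idem.
Qed.

(* From [x = e/s = f/t] with [e] in [E] and [f] in [F]: [x = (e t)/(s t)], [e t = f s]. *)
Lemma loc_meet_stable : stable T L.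
Proof.
move=> E F [[_ _ EM] _] [[_ _ FM] _]; apply: subK_antisym.
  by move=> x hx; split; apply: loc_meet_mono hx => y [].
move=> x [hxE hxF] P hP; have hP' := Phi_prime hP.
have [e [s [he hs xes]]] := hxE P hP; have [f [t [hf ht xft]]] := hxF P hP.
have [ns nt] := (compl_in_neq0 hP' hs, compl_in_neq0 hP' ht).
have et_fs : e * t = f * s.
  transitivity (e / s * (s * t)); first by field; rewrite ns.
  by rewrite -xes xft; field; rewrite nt.
exists (e * t), (s * t); split.
- split; first by rewrite mulrC; apply: EM => //; apply: hDT; case: ht.
  by rewrite et_fs mulrC; apply: FM => //; apply: hDT; case: hs.
- exact: compl_inM.
- by rewrite xes; field; rewrite ns nt.
Qed.

End Meet.
End Localization.

Lemma quasi_prime_in (K : fieldType) (R : K -> Prop) st P :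
  quasi_prime R st P -> prime_in R P.
Proof. by case=> [[[_ [[P0 _ _] _]] _] P1 Pprime]; split. Qed.

Section Tilde.
Variable K : fieldType.
Variable R : K -> Prop.
Variable st : (K -> Prop) -> (K -> Prop).
Hypothesis hR : subring R.
Hypothesis hs : semistar R st.
Hypothesis hq : quotient_field R.
Local Notation fp := (finite_part R st).

(* Otherwise the conductor lies in a quasi-maximal [Q], yet contains the denominator
   of [x] at [Q]. *)
Lemma finite_part_conductor_one M E x : subring M -> subK R M -> nzsubmod M E ->
  (forall Q, quasi_max R fp Q -> locK (compl_in R Q) E x) -> fp (conductor R E x) 1.
Proof.
move=> hM RM hE hx; apply: NNPP => n1.
have [Q [hQ cQ]] := quasi_max_exists hR hs (conductor_nzideal x hR RM hq hE) n1.
have [e [s [he [sR nQs] xe]]] := hx Q hQ.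
have ns : s != 0 by apply: contra_not_neq nQs => ->; case: hQ => [[[_ [[]]]]].
by apply: nQs; apply: cQ; split => //; rewrite xe mulrC divfK.
Qed.

Lemma stilde_le_finite_part : st_le R (stilde R st) fp.
Proof.
move=> E hE x hx; have [x0 | nx] := eqVneq x 0.
  by rewrite x0; case: (finite_part_nz hR hs hE) => [[]].
have [F [hF Fc F1]] := finite_part_conductor_one hR (fun y hy => hy) hE hx.
exists (scaleK x F); split; first exact: fgnz_scale.
  by move=> _ [f [hf ->]]; rewrite mulrC; exact: (proj2 (Fc f hf)).
by rewrite (st_scale hs nx (proj1 hF)); exists 1; rewrite mulr1.
Qed.

End Tilde.

Section Ell.
Variable K : fieldType.
Variables D T : K -> Prop.
Variable st : (K -> Prop) -> (K -> Prop).
Hypothesis hD : subring D.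
Hypothesis hq : quotient_field D.
Hypothesis hs : semistar D st.
Hypothesis hT : subring T.
Hypothesis hDT : subK D T.
Local Notation fpD := (finite_part D st).
Local Notation L := (ell D st).
Implicit Types (E F : K -> Prop).

Lemma ell_semistar : semistar T L.
Proof. exact: (loc_meet_semistar hD hDT (fun P => @quasi_prime_in K D fpD P)). Qed.

Lemma ell_stable : stable T L.
Proof. exact: (loc_meet_stable hD hDT (fun P => @quasi_prime_in K D fpD P)). Qed.

Lemma ell_mono E F : subK E F -> subK (L E) (L F).
Proof. exact: loc_meet_mono. Qed.

Lemma ell_ring1 : L T 1.
Proof. exact: (loc_meet_ext hD (fun P => @quasi_prime_in K D fpD P) (subring1 hT)). Qed.

Lemma quasi_ideal_avoid P F : quasi_ideal D fpD P -> ~ P 1 ->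
  nzideal D F -> fgmod D F -> st F = st D -> exists f, F f /\ ~ P f.
Proof.
move=> qP nP1 hF fgF stF; apply: NNPP => none; apply: nP1.
apply: (quasi_ideal_fg_one hD qP (conj (proj2 hF) fgF)).
  by move=> y Fy; apply: NNPP => nPy; apply: none; exists y.
by rewrite stF; apply: (st_ext hs (subring_nzsubmod hD)); exact: subring1.
Qed.

Lemma loc_meet_linked (Phi : (K -> Prop) -> Prop) R :
  (forall P, Phi P -> quasi_prime D fpD P) -> subring R -> subK D R ->
  linked D st R (loc_meet D Phi).
Proof.
move=> Phi_qp hR DR F hF fgF stF.
suff loc_eq P : Phi P -> locK (compl_in D P) (genmod R F) = locK (compl_in D P) R.
  apply: subK_antisym => x hx P hP.
  - by rewrite -loc_eq //; apply: hx.
  - by rewrite loc_eq //; apply: hx.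
move=> /Phi_qp qpP; have [qP nP1 _] := qpP.
have [f [Ff nPf]] := quasi_ideal_avoid qP nP1 hF fgF stF.
exact: (locK_genmod_unit hD (quasi_prime_in qpP) hR DR (proj1 hF) Ff nPf).
Qed.

Lemma linked_ell : linked D st T L.
Proof. exact: (loc_meet_linked (fun P qP => qP) hT hDT). Qed.

Lemma linked_stilde : linked D st D (stilde D st).
Proof.
exact: (loc_meet_linked (fun P => quasi_max_prime hD hs (Q := P)) hD (fun y hy => hy)).
Qed.

Section Comparison.
Variable st' : (K -> Prop) -> (K -> Prop).
Hypothesis hs' : semistar T st'.

Lemma ell_le_stilde : linked D st T st' -> st_le T L (stilde T st').
Proof.
move=> hl E hE x hx Q [qQ nQ1 _].
have [F [hF Fc F1]] : fpD (conductor D E x) 1.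
  apply: (finite_part_conductor_one hD hs hq hT hDT hE) => P /(quasi_max_prime hD hs).
  exact: hx.
have FD : subK F D by move=> y /Fc [].
have [hFid fgF] := (conj FD (proj1 hF), proj2 hF).
have stF : st F = st D := st_eq_ring_of_one hD hs (proj1 hF) FD F1.
have [d [[dD dE] nQd]] : exists d, conductor D E x d /\ ~ Q d.
  apply: NNPP => none; apply: nQ1.
  have [hTF fgTF] := genmod_nzideal hD hT hDT hFid fgF.
  apply: (quasi_ideal_fg_one hT qQ (conj (proj2 hTF) fgTF)).
    apply: genmod_min; first by case: qQ => [[_ []]].
    by move=> y /Fc cy; apply: NNPP => nQy; apply: none; exists y.
  rewrite (hl F hFid fgF stF); apply: (st_ext hs' (subring_nzsubmod hT)).
  exact: subring1.
have nd : d != 0 by apply: contra_not_neq nQd => ->; case: qQ => [[_ [[]]]].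
by exists (d * x), d; split => //; [split => //; apply: hDT | field].
Qed.

Lemma ell_le_finite_part : linked D st T st' -> st_le T L (finite_part T st').
Proof.
move=> hl E hE x /(ell_le_stilde hl hE).
exact: (stilde_le_finite_part hT hs' (quotient_field_sub hq hDT) hE).
Qed.

Lemma st_eq_ring_of_ell1 : st_le T L (finite_part T st') ->
  forall F, nzideal T F -> L F 1 -> st' F = st' T.
Proof.
move=> le F [FT hF] /(le F hF) [G [hG GF G1]].
apply: (st_eq_ring_of_one hT hs' hF FT).
exact: (st_mono hs' (proj1 hG) hF GF).
Qed.

Lemma linked_of_ell_le : st_le T L (finite_part T st') -> linked D st T st'.
Proof.
move=> le F hF fgF stF; have [hTF _] := genmod_nzideal hD hT hDT hF fgF.
apply: (st_eq_ring_of_ell1 le hTF).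
by rewrite (linked_ell hF fgF stF); exact: ell_ring1.
Qed.

Lemma ell_linked_of_linked : linked D st T st' -> linked T L T st'.
Proof.
move=> hl F hF _ LF; rewrite (genmod_id hT (proj1 (proj2 hF))).
apply: (st_eq_ring_of_ell1 (ell_le_finite_part hl) hF).
by rewrite LF; exact: ell_ring1.
Qed.

Lemma linked_of_ell_linked : linked T L T st' -> linked D st T st'.
Proof.
move=> hl F hF fgF stF; have [hTF fgTF] := genmod_nzideal hD hT hDT hF fgF.
rewrite -(genmod_id hT (proj1 (proj2 hTF))).
exact: hl hTF fgTF (linked_ell hF fgF stF).
Qed.

End Comparison.

Lemma ell_finite_type : finite_type T L.
Proof.
move=> E hE; apply: subK_antisym.
  exact: (ell_le_finite_part ell_semistar linked_ell hE).
by move=> x [F [_ FE Fx]]; exact: (ell_mono FE Fx).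
Qed.

Lemma stilde_ell E : nzsubmod T E -> stilde T L E = L E.
Proof.
move=> hE; apply: subK_antisym; last exact: (ell_le_stilde ell_semistar linked_ell hE).
rewrite (ell_finite_type hE).
exact: (stilde_le_finite_part hT ell_semistar (quotient_field_sub hq hDT) hE).
Qed.

End Ell.

Theorem proposition3p12 (K : fieldType) (D T : K -> Prop)
  (st : (K -> Prop) -> (K -> Prop)) (st' : (K -> Prop) -> (K -> Prop)) :
  domain_with_qf D -> semistar D st -> overring D T -> semistar T st' ->
  let l := ell D st in
  (* (1) *)
  (semistar T l /\ stable T l) /\
  (* (2) *)
  (linked D st T st' ->
     st_le T l (stilde T st') /\ st_le T (stilde T st') (finite_part T st') /\
     linked T l T st') /\
  (* (3) *)
  (linked D st T l /\ linked D st D (stilde D st)) /\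
  (* (4) *)
  (finite_type T l /\ forall E, nzsubmod T E -> stilde T l E = l E) /\
  (* (5) l is the least (hence unique minimal) element of
         { ast_f : ast semistar on T, T (st,ast)-linked to D } *)
  ((exists ast, [/\ semistar T ast, linked D st T ast &
                   forall E, nzsubmod T E -> finite_part T ast E = l E]) /\
   (forall ast, semistar T ast -> linked D st T ast -> st_le T l (finite_part T ast))) /\
  (* (6) *)
  (linked D st T st' <-> linked T l T st') /\
  (* (7) *)
  (linked D st T st' <-> st_le T l (finite_part T st')).
Proof.
move=> [hD hq] hs [hT hDT] hs' l.
have hqT := quotient_field_sub hq hDT.
have hl : semistar T l by exact: ell_semistar.
split; first by split; [exact: hl | exact: ell_stable].
split.
  move=> hlink; split; first exact: ell_le_stilde.
  by split; [exact: stilde_le_finite_part | exact: ell_linked_of_linked].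
split; first by split; [exact: linked_ell | exact: linked_stilde].
split; first by split; [exact: ell_finite_type | exact: stilde_ell].
split.
  split; last by move=> ast; exact: ell_le_finite_part.
  exists l; split => // [|E hE]; first exact: linked_ell.
  by rewrite -ell_finite_type.
split; split; [exact: ell_linked_of_linked | exact: linked_of_ell_linked |
               exact: ell_le_finite_part | exact: linked_of_ell_le].
Qed.
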